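(* Let $\gamma\in[0,1)$ and $\Omega_{\gamma}=\{z\in\mathbb{C}:|z+\frac{\gamma}{1-\gamma}|<\frac{1}{1-\gamma}\}$. Suppose that $h(z)=\sum_{n=0}^\infty a_n\left(z+\frac{\gamma}{1-\gamma}\right)^n$ and $g(z)=\sum_{n=0}^\infty b_n\left(z+\frac{\gamma}{1-\gamma}\right)^n$ are analytic in $\Omega_{\gamma}$, that $|h(z)|\le 1$ in $\Omega_\gamma$, and that $|g'(z)|\le k|h'(z)|$ in $\Omega_{\gamma}$ for some $k\in[0,1)$. Then for $|(1-\gamma)z+\gamma|=\rho<1$, $$\sum_{n=1}^\infty n\frac{|b_n|^2}{(1-\gamma)^{2n}}\rho^{2n}\le k^2\sum_{n=1}^\infty n\frac{|a_n|^2}{(1-\gamma)^{2n}}\rho^{2n}\quad\text{and}\quad \sum_{n=1}^\infty \frac{|b_n|^2}{(1-\gamma)^{2n}}\rho^{n}\le k^2\sum_{n=1}^\infty \frac{|a_n|^2}{(1-\gamma)^{2n}}\rho^{n}.$$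
   Context: $\Omega_\gamma$ is the open disk centered at $-\gamma/(1-\gamma)$ of radius $1/(1-\gamma)$; it contains the unit disk $\mathbb{D}$. *)

From Stdlib Require Export Reals.
From Coquelicot Require Export Coquelicot.
Open Scope R_scope.

Definition cgam (gamma : R) : R := gamma / (1 - gamma).

Definition Omega (gamma : R) (z : C) : Prop :=
  Cmod (Cplus z (RtoC (cgam gamma))) < 1 / (1 - gamma).

(* Sum over n >= 1 of a nonnegative real sequence, as an extended real
   (value in [0, +oo]): the limit of the partial sums  sum_{n=1}^{N} u n. *)
Definition sum_from1 (u : nat -> R) : Rbar :=
  Lim_seq (fun N => sum_n (fun n => u (S n)) N).

From Stdlib Require Import Reals Lra Lia Psatz.
From Coquelicot Require Import Coquelicot.
Open Scope R_scope.

(* In the variable w = z + gamma/(1-gamma) the disc Omega_gamma becomes |w| < R0 := 1/(1-gamma),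
   rho = (1-gamma)|w|, and the two sums become sum_{n>=1} n |b_n|^2 x^n at x = |w|^2 and
   sum_{n>=1} |b_n|^2 x^n at x = |w|/(1-gamma); both points satisfy x < R0^2.
   For |w| = u < R0 we have w g'(w) = sum n b_n w^n, so averaging |w g'(w)|^2 <= k^2 |w h'(w)|^2
   over the (m+1)-st roots of unity scaled by u and letting m -> oo (a discrete Parseval
   identity) gives  sum n^2 |b_n|^2 x^n <= k^2 sum n^2 |a_n|^2 x^n  for x = u^2.
   With D(x) = k^2 sum |a_n|^2 x^n - sum |b_n|^2 x^n this reads x (x D')' >= 0, and two applications
   of the mean value theorem from x = 0 give x D'(x) >= 0 and D(x) >= D(0): these are the two
   claimed inequalities. *)

(** * Real power series *)

Lemma Rbar_le_of_forall_lt (X : R) (L : Rbar) :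
  0 < X -> (forall r, 0 <= r < X -> Rbar_le r L) -> Rbar_le X L.
Proof.
  intros HX H.
  assert (H0 := H 0 (conj (Rle_refl 0) HX)).
  destruct L as [l| |]; simpl in *; auto.
  apply Rnot_lt_le; intros Hl.
  specialize (H ((X + l) / 2)); simpl in H; lra.
Qed.

Lemma CV_radius_ge_of_bounded (a : nat -> R) (r M : R) :
  (forall n, Rabs (a n * r ^ n) <= M) -> Rbar_le r (CV_radius a).
Proof. intros H. apply (proj1 (CV_radius_bounded a)). now exists M. Qed.

Lemma bounded_of_lt_CV_radius (a : nat -> R) (x : R) :
  Rbar_lt (Rabs x) (CV_radius a) -> exists M, forall n, Rabs (a n * x ^ n) <= M.
Proof.
  intros H. apply CV_disk_inside, ex_series_lim_0 in H.
  destruct (filterlim_bounded _ (ex_intro _ 0 H)) as [M HM].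
  exists M. intros n. rewrite <- Rabs_Rabsolu. apply HM.
Qed.

Lemma ex_series_lt_CV_radius (a : nat -> R) (x : R) :
  Rbar_lt (Rabs x) (CV_radius a) -> ex_series (fun n => a n * x ^ n).
Proof. intros H. now apply ex_series_Rabs, CV_disk_inside. Qed.

Lemma Rbar_lt_CV_radius (a : nat -> R) (X x : R) :
  Rbar_le X (CV_radius a) -> 0 <= x < X -> Rbar_lt (Rabs x) (CV_radius a).
Proof.
  intros Ha Hx. rewrite Rabs_pos_eq by lra.
  apply Rbar_lt_le_trans with X; [simpl; lra | exact Ha].
Qed.

Lemma CV_radius_INR_mult (a : nat -> R) :
  CV_radius (fun n => INR n * a n) = CV_radius a.
Proof.
  rewrite <- (CV_radius_derive a), <- (CV_radius_incr_1 (PS_derive a)).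
  apply CV_radius_ext. intros [|n]; [apply Rmult_0_l | reflexivity].
Qed.

Lemma CV_radius_INR_pow_mult (a : nat -> R) (p : nat) :
  CV_radius (fun n => INR n ^ p * a n) = CV_radius a.
Proof.
  induction p as [|p IH].
  - apply CV_radius_ext. intros n. apply Rmult_1_l.
  - rewrite <- IH, <- (CV_radius_INR_mult (fun n => INR n ^ p * a n)).
    apply CV_radius_ext. intros n. simpl. ring.
Qed.

Lemma CV_radius_sqr_ge (a : nat -> R) (r : R) :
  0 < r -> Rbar_le r (CV_radius a) -> Rbar_le (r ^ 2) (CV_radius (fun n => a n ^ 2)).
Proof.
  intros Hr Ha. apply Rbar_le_of_forall_lt; [nra |]. intros s Hs.
  assert (Hsqrt : 0 <= sqrt s < r).
  { split; [apply sqrt_pos |].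
    rewrite <- (sqrt_pow2 r) by lra. apply sqrt_lt_1_alt. lra. }
  destruct (bounded_of_lt_CV_radius a (sqrt s) (Rbar_lt_CV_radius a r _ Ha Hsqrt))
    as [M HM].
  apply (CV_radius_ge_of_bounded _ _ (M ^ 2)). intros n.
  replace (a n ^ 2 * s ^ n) with ((a n * sqrt s ^ n) ^ 2).
  - rewrite <- RPow_abs. apply pow_incr. split; [apply Rabs_pos | apply HM].
  - rewrite <- (pow2_sqrt s) at 2 by lra. rewrite <- pow_mult, Nat.mul_comm, pow_mult. ring.
Qed.

Lemma ex_series_sqr (t : nat -> R) :
  (forall n, 0 <= t n) -> ex_series t -> ex_series (fun n => t n ^ 2).
Proof.
  intros Ht Hex.
  destruct (filterlim_bounded t (ex_intro _ 0 (ex_series_lim_0 t Hex))) as [M HM].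
  apply (ex_series_le (V := R_CompleteNormedModule) _ (fun n => M * t n));
    [| now apply (ex_series_scal_l (V := R_NormedModule))].
  intros n. change norm with Rabs. specialize (HM n). change norm with Rabs in HM.
  rewrite Rabs_pos_eq in * by (try apply pow_le; apply Ht).
  specialize (Ht n). nra.
Qed.

Lemma PSeries_INR_mult (a : nat -> R) (x : R) :
  PSeries (fun n => INR n * a n) x = x * PSeries (PS_derive a) x.
Proof.
  rewrite <- PSeries_incr_1. apply PSeries_ext. intros [|n]; [apply Rmult_0_l | reflexivity].
Qed.

Lemma PSeries_sub_le_of_INR_mult_le (s t : nat -> R) (K X : R) :
  0 <= K -> Rbar_le X (CV_radius s) -> Rbar_le X (CV_radius t) ->
  (forall x, 0 < x < X ->
     PSeries (fun n => INR n * s n) x <= K * PSeries (fun n => INR n * t n) x) ->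
  forall x, 0 <= x < X -> PSeries s x - s O <= K * (PSeries t x - t O).
Proof.
  intros HK Hs Ht Hw x Hx.
  set (f y := K * PSeries t y - PSeries s y).
  set (f' y := K * PSeries (PS_derive t) y - PSeries (PS_derive s) y).
  assert (Hf : forall y, 0 <= y < X -> is_derive f y (f' y)).
  { intros y Hy. apply (is_derive_minus (fun y => K * PSeries t y) (PSeries s)).
    - apply is_derive_scal, is_derive_PSeries, (Rbar_lt_CV_radius _ X); auto.
    - apply is_derive_PSeries, (Rbar_lt_CV_radius _ X); auto. }
  destruct (Req_dec x 0) as [-> | Hx0].
  { rewrite !PSeries_0. lra. }
  destruct (MVT_cor2 f f' 0 x) as [c [Hmvt Hc]]; [lra | |].
  { intros c Hc. apply is_derive_Reals, Hf. lra. }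
  assert (Hf'c : 0 <= f' c).
  { apply (Rmult_le_reg_l c); [lra |]. specialize (Hw c ltac:(lra)).
    rewrite !PSeries_INR_mult in Hw. unfold f'. nra. }
  unfold f in Hmvt. rewrite !PSeries_0 in Hmvt. nra.
Qed.

Lemma sum_from1_ext (u v : nat -> R) : (forall n, u n = v n) -> sum_from1 u = sum_from1 v.
Proof. intros E. apply Lim_seq_ext. intros N. apply sum_n_ext. intros n. apply E. Qed.

Lemma sum_from1_PSeries (s : nat -> R) (x : R) :
  Rbar_lt (Rabs x) (CV_radius s) -> sum_from1 (fun n => s n * x ^ n) = Finite (PSeries s x - s O).
Proof.
  intros Hx. apply ex_series_lt_CV_radius in Hx.
  unfold sum_from1, PSeries. rewrite (Series_incr_1 _ Hx), pow_O, Rmult_1_r.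
  apply is_lim_seq_unique. replace (s O + _ - s O) with (Series (fun n => s (S n) * x ^ S n)) by ring.
  now apply Series_correct, (ex_series_incr_1 (fun n => s n * x ^ n)).
Qed.

Lemma mean_sub_le (x y : nat -> R) (B : R) (m : nat) :
  (forall j, Rabs (x j - y j) <= B) ->
  Rabs (/ INR (S m) * sum_n x m - / INR (S m) * sum_n y m) <= B.
Proof.
  intros Hxy. assert (HN : 0 < INR (S m)) by apply lt_0_INR, Nat.lt_0_succ.
  assert (Hsum : forall x' y' : nat -> R, (forall j, x' j <= y' j + B) ->
    sum_n x' m <= sum_n y' m + INR (S m) * B).
  { intros x' y' H. rewrite <- sum_n_const, <- (sum_n_plus (G := R_AbelianMonoid)).
    apply sum_n_m_le, H. }
  assert (H1 : sum_n x m <= sum_n y m + INR (S m) * B).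
  { apply Hsum. intros j. pose proof (Hxy j) as Hj. apply Rabs_le_between' in Hj. lra. }
  assert (H2 : sum_n y m <= sum_n x m + INR (S m) * B).
  { apply Hsum. intros j. pose proof (Hxy j) as Hj. apply Rabs_le_between' in Hj. lra. }
  rewrite <- Rmult_minus_distr_l, Rabs_mult, Rabs_pos_eq by (left; now apply Rinv_0_lt_compat).
  apply (Rmult_le_reg_l (INR (S m))); [exact HN |].
  rewrite <- Rmult_assoc, Rinv_r, Rmult_1_l by lra. apply Rabs_le. lra.
Qed.

(** * Sums over roots of unity *)

(* Coquelicot's [plus], [opp] and [scal] on [C] reduce to [Cplus], [Copp] and [Cmult],
   but [ring] only recognises the latter. *)
Ltac C_ring :=
  repeat match goal with
  | |- context [plus ?a ?b] => change (plus a b) with (Cplus a b)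
  | |- context [opp ?a] => change (opp a) with (Copp a)
  | |- context [scal ?a ?b] => change (scal a b) with (Cmult a b)
  end;
  match goal with |- ?x = ?y => change (@eq C x y) end; ring.

Lemma RtoC_sum_n (f : nat -> R) (m : nat) :
  RtoC (sum_n f m) = sum_n (fun j => RtoC (f j)) m.
Proof.
  induction m; [now rewrite !sum_O |].
  rewrite !sum_Sn, <- IHm. apply RtoC_plus.
Qed.

Lemma Cconj_sum_n (f : nat -> C) (m : nat) :
  Cconj (sum_n f m) = sum_n (fun j => Cconj (f j)) m.
Proof.
  induction m; [now rewrite !sum_O |].
  rewrite !sum_Sn, <- IHm. apply Cplus_conj.
Qed.

Lemma sum_n_const_C (c : C) (m : nat) : sum_n (fun _ => c) m = (INR (S m) * c)%C.
Proof.
  induction m as [|m IH]; [rewrite sum_O; simpl; ring |].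
  rewrite sum_Sn, IH, (S_INR (S m)), RtoC_plus. C_ring.
Qed.

Lemma Cmult_sum_n (f g : nat -> C) (m l : nat) :
  (sum_n f m * sum_n g l)%C = sum_n (fun i => sum_n (fun j => f i * g j)%C l) m.
Proof.
  rewrite <- (sum_n_mult_r (K := C_Ring)). apply sum_n_ext. intros i.
  rewrite <- (sum_n_mult_l (K := C_Ring)). reflexivity.
Qed.

Lemma sum_n_single {G : AbelianMonoid} (f : nat -> G) (m n : nat) :
  (n <= m)%nat -> (forall l, (l <= m)%nat -> l <> n -> f l = zero) -> sum_n f m = f n.
Proof.
  induction m as [|m IH]; intros Hn Hf.
  - replace n with O by lia. apply sum_O.
  - rewrite sum_Sn. destruct (Nat.eq_dec n (S m)) as [-> | Hnm].
    + rewrite (sum_n_ext_loc _ (fun _ => zero)) by (intros; apply Hf; lia).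
      unfold sum_n. rewrite sum_n_m_const_zero. apply plus_zero_l.
    + rewrite IH, (Hf (S m)) by (auto; lia). apply plus_zero_r.
Qed.

Lemma Cmult_reg_l (x a b : C) : x <> 0 -> (x * a)%C = (x * b)%C -> a = b.
Proof.
  intros Hx E. replace a with (/ x * (x * a))%C by (field; auto).
  rewrite E. field; auto.
Qed.

Lemma Cpow_cos_sin (t : R) (j : nat) :
  Cpow (cos t, sin t) j = (cos (INR j * t), sin (INR j * t)).
Proof.
  induction j as [|j IH].
  - simpl. now rewrite Rmult_0_l, cos_0, sin_0.
  - rewrite Cpow_S, IH, S_INR, Rmult_plus_distr_r, Rmult_1_l, cos_plus, sin_plus.
    apply injective_projections; simpl; ring.
Qed.

Definition root_unity (N : nat) : C := (cos (2 * PI / INR N), sin (2 * PI / INR N)).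

Lemma Cmod_root_unity (N : nat) : Cmod (root_unity N) = 1.
Proof.
  unfold Cmod, root_unity; simpl.
  pose proof (sin2_cos2 (2 * PI / INR N)) as H. unfold Rsqr in H.
  match goal with |- sqrt ?e = 1 => replace e with 1 by (rewrite !Rmult_1_r; lra) end.
  apply sqrt_1.
Qed.

Lemma Cconj_root_unity_mult (N : nat) : (Cconj (root_unity N) * root_unity N)%C = 1.
Proof.
  rewrite Cmult_comm, <- Cmod2_conj, Cmod_root_unity.
  apply injective_projections; simpl; ring.
Qed.

Lemma root_unity_pow_order (N : nat) : (0 < N)%nat -> Cpow (root_unity N) N = 1.
Proof.
  intros HN. unfold root_unity. rewrite Cpow_cos_sin.
  assert (0 < INR N) by (apply lt_0_INR; lia).
  replace (INR N * (2 * PI / INR N)) with (2 * PI) by (field; lra).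
  now rewrite cos_2PI, sin_2PI.
Qed.

Lemma root_unity_pow_neq_1 (N d : nat) : (0 < d < N)%nat -> Cpow (root_unity N) d <> 1.
Proof.
  intros Hd E. unfold root_unity in E. rewrite Cpow_cos_sin in E.
  apply (f_equal fst) in E. simpl in E.
  assert (HdN : 0 < INR d / INR N < 1).
  { assert (0 < INR d < INR N) by (split; [apply lt_0_INR | apply lt_INR]; lia).
    split; [apply Rdiv_lt_0_compat; lra |].
    apply (Rmult_lt_reg_r (INR N)); [lra |]. field_simplify; lra. }
  assert (Hsin : 0 < sin (PI * (INR d / INR N))).
  { apply sin_gt_0; pose proof PI_RGT_0; nra. }
  replace (INR d * (2 * PI / INR N)) with (2 * (PI * (INR d / INR N))) in E
    by (unfold Rdiv; ring).
  rewrite cos_2a_sin in E. nra.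
Qed.

Lemma root_unity_pow_inj (m n l : nat) :
  (n <= m)%nat -> (l <= m)%nat ->
  Cpow (root_unity (S m)) n = Cpow (root_unity (S m)) l -> n = l.
Proof.
  set (w := root_unity (S m)).
  assert (Hw : forall i, Cpow w i <> 0).
  { intros i E. apply (f_equal Cmod) in E.
    unfold w in E. rewrite Cmod_pow, Cmod_0, Cmod_root_unity, pow1 in E. lra. }
  assert (Hle : forall i j, (i <= j <= m)%nat -> Cpow w i = Cpow w j -> i = j).
  { intros i j Hij E. destruct (Nat.eq_dec i j) as [| Hne]; auto. exfalso.
    apply (root_unity_pow_neq_1 (S m) (j - i)); [lia |].
    apply (Cmult_reg_l (Cpow w i)); auto.
    rewrite <- Cpow_add_r, Cmult_1_r. replace (i + (j - i))%nat with j by lia. auto. }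
  intros Hn Hl E. destruct (Nat.le_ge_cases n l).
  - apply Hle; auto.
  - symmetry. apply Hle; auto.
Qed.

Lemma sum_n_Cpow_mult_geom (q : C) (m : nat) :
  (sum_n (fun j => Cpow q j) m * (1 - q))%C = (1 - Cpow q (S m))%C.
Proof.
  induction m as [|m IH].
  - rewrite sum_O. simpl. ring.
  - rewrite sum_Sn. change (plus ?x ?y) with (Cplus x y).
    rewrite Cmult_plus_distr_r, IH. simpl. ring.
Qed.

Lemma sum_root_unity_orthogonal (m n l : nat) :
  (n <= m)%nat -> (l <= m)%nat -> n <> l ->
  sum_n (fun j => Cpow (Cpow (root_unity (S m)) n * Cpow (Cconj (root_unity (S m))) l) j) m
  = RtoC 0.
Proof.
  intros Hn Hl Hnl.
  assert (Hw : forall i, (Cpow (Cconj (root_unity (S m))) i * Cpow (root_unity (S m)) i)%C = 1).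
  { intros i. now rewrite <- Cpow_mult_l, Cconj_root_unity_mult, Cpow_1_l. }
  assert (HwS : Cpow (root_unity (S m)) (S m) = 1) by (apply root_unity_pow_order; lia).
  set (w := root_unity (S m)) in *.
  set (q := (Cpow w n * Cpow (Cconj w) l)%C).
  assert (Hq1 : q <> 1).
  { intros E. apply Hnl, (root_unity_pow_inj m); auto. fold w.
    transitivity (q * Cpow w l)%C.
    - unfold q. rewrite <- Cmult_assoc, Hw. ring.
    - rewrite E. ring. }
  assert (HqS : Cpow q (S m) = 1).
  { unfold q. rewrite Cpow_mult_l, <- !Cpow_mult_r, !(Nat.mul_comm _ (S m)), !Cpow_mult_r.
    rewrite <- Cpow_conj, HwS, !Cpow_1_l.
    replace (Cconj 1) with (RtoC 1) by (apply injective_projections; simpl; ring).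
    rewrite Cpow_1_l. ring. }
  apply (Cmult_reg_l (1 - q)).
  { intros E. apply Hq1. replace q with (1 - (1 - q))%C by ring. rewrite E. ring. }
  rewrite Cmult_comm, sum_n_Cpow_mult_geom, HqS. ring.
Qed.

Lemma sum_root_unity_Cmod_sqr (al : nat -> C) (m : nat) :
  sum_n (fun j => Cmod (sum_n (fun n => al n * Cpow (Cpow (root_unity (S m)) j) n)%C m) ^ 2) m
  = INR (S m) * sum_n (fun n => Cmod (al n) ^ 2) m.
Proof.
  set (T n l j := (al n * Cconj (al l)
    * Cpow (Cpow (root_unity (S m)) n * Cpow (Cconj (root_unity (S m))) l) j)%C).
  assert (Hexpand : forall j,
    RtoC (Cmod (sum_n (fun n => al n * Cpow (Cpow (root_unity (S m)) j) n)%C m) ^ 2)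
    = sum_n (fun n => sum_n (fun l => T n l j) m) m).
  { intros j. rewrite Cmod2_conj, Cconj_sum_n, Cmult_sum_n.
    apply sum_n_ext. intros n. apply sum_n_ext. intros l. unfold T.
    rewrite Cmult_conj, !Cpow_conj, Cpow_mult_l, <- !Cpow_mult_r, !(Nat.mul_comm j). C_ring. }
  assert (Hunit : forall n,
    (Cpow (root_unity (S m)) n * Cpow (Cconj (root_unity (S m))) n)%C = 1).
  { intros n. rewrite <- Cpow_mult_l, Cmult_comm, Cconj_root_unity_mult. apply Cpow_1_l. }
  assert (Hdiag : forall n, (n <= m)%nat ->
    sum_n (fun l => sum_n (fun j => T n l j) m) m = (INR (S m) * (al n * Cconj (al n)))%C).
  { intros n Hn. rewrite (sum_n_single _ m n Hn).
    - unfold T. rewrite Hunit, (sum_n_ext _ (fun _ => al n * Cconj (al n))%C).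
      + apply sum_n_const_C.
      + intros j. rewrite Cpow_1_l. apply Cmult_1_r.
    - intros l Hl Hln. unfold T.
      rewrite (sum_n_mult_l (K := C_Ring) (al n * Cconj (al l))%C).
      change (mult ?x ?y) with (Cmult x y).
      rewrite sum_root_unity_orthogonal by auto. apply Cmult_0_r. }
  apply RtoC_inj. rewrite RtoC_mult, !RtoC_sum_n.
  rewrite (sum_n_ext _ _ _ Hexpand), sum_n_switch.
  rewrite (sum_n_ext_loc _ (fun n => INR (S m) * (al n * Cconj (al n)))%C).
  - rewrite <- (sum_n_mult_l (K := C_Ring)). apply sum_n_ext. intros n.
    now rewrite Cmod2_conj.
  - intros n Hn. rewrite <- Hdiag by auto. apply sum_n_switch.
Qed.

(** * Complex power series *)

Lemma pow_n_Cpow (w : C) (n : nat) : @pow_n C_Ring w n = Cpow w n.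
Proof. induction n as [|n IH]; [reflexivity | simpl; now rewrite IH]. Qed.

Lemma is_pseries_C (c : nat -> C) (w l : C) :
  is_pseries c w l <-> is_series (fun n => c n * Cpow w n)%C l.
Proof.
  split; apply is_series_ext; intros n; rewrite ?pow_n_Cpow; [apply Cmult_comm |].
  rewrite <- pow_n_Cpow. apply Cmult_comm.
Qed.

Lemma norm_is_series_le {K : AbsRing} {V : NormedModule K}
  (z : nat -> V) (t : nat -> R) (L : V) (T : R) :
  is_series z L -> is_series t T -> (forall n, norm (z n) <= t n) -> norm L <= T.
Proof.
  intros Hz Ht Hzt.
  assert (Hl : is_lim_seq (fun m => norm (sum_n z m)) (norm L))
    by exact (filterlim_comp _ _ _ _ _ _ _ _ Hz (filterlim_norm L)).
  apply (is_lim_seq_le (fun m => norm (sum_n z m)) (sum_n t) (norm L) T); [| exact Hl | exact Ht].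
  intros m. eapply Rle_trans; [apply norm_sum_n_m | apply sum_n_m_le, Hzt].
Qed.

Lemma norm_is_series_tail_le {K : AbsRing} {V : NormedModule K}
  (z : nat -> V) (t : nat -> R) (L : V) (T : R) (m : nat) :
  is_series z L -> is_series t T -> (forall n, norm (z n) <= t n) ->
  norm (minus L (sum_n z m)) <= T - sum_n t m.
Proof.
  intros Hz Ht Hzt.
  assert (Htail : forall (K' : AbsRing) (W : NormedModule K') (s : nat -> W) (l : W),
            is_series s l -> is_series (fun k => s (S m + k)%nat) (minus l (sum_n s m))).
  { intros K' W s l Hs. apply is_series_incr_n; [lia |]. simpl.
    unfold minus. now rewrite <- plus_assoc, (plus_opp_l (G := W)), plus_zero_r. }
  apply (norm_is_series_le _ _ _ _ (Htail _ _ z L Hz) (Htail _ _ t T Ht)).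
  intros k. apply Hzt.
Qed.

Lemma CV_radius_Cmod_ge (c : nat -> C) (R0 : R) :
  0 < R0 -> (forall w, Cmod w < R0 -> ex_pseries c w) ->
  Rbar_le R0 (CV_radius (fun n => Cmod (c n))).
Proof.
  intros HR Hc. apply Rbar_le_of_forall_lt; auto. intros r Hr.
  destruct (Hc (RtoC r)) as [l Hl]; [rewrite Cmod_R, Rabs_pos_eq; lra |].
  set (a k := scal (pow_n (RtoC r) k) (c k)).
  destruct (filterlim_bounded (sum_n a) (ex_intro _ l Hl)) as [M HM].
  apply (CV_radius_ge_of_bounded _ _ (2 * M)). intros n.
  replace (Rabs (Cmod (c n) * r ^ n)) with (norm (a n)).
  2:{ unfold a. change norm with Cmod. change scal with Cmult.
      rewrite pow_n_Cpow, Cmod_mult, Cmod_pow, Cmod_R, Rabs_mult, RPow_abs.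
      rewrite (Rabs_pos_eq (Cmod _)) by apply Cmod_ge_0. apply Rmult_comm. }
  pose proof (HM O) as HM0. rewrite sum_O in HM0. pose proof (norm_ge_0 (a O)).
  destruct n as [|n]; [lra |].
  replace (a (S n)) with (sum_n a (S n) - sum_n a n)%C
    by (rewrite sum_Sn; C_ring).
  change norm with Cmod in *. pose proof (HM (S n)). pose proof (HM n).
  unfold Cminus. eapply Rle_trans; [apply Cmod_triangle |]. rewrite Cmod_opp. lra.
Qed.

Lemma Cmod_sqr_sub_partial_sum_le (z : nat -> C) (t : nat -> R) (L : C) (T : R) (m : nat) :
  is_series z L -> is_series t T -> (forall n, Cmod (z n) <= t n) ->
  Rabs (Cmod L ^ 2 - Cmod (sum_n z m) ^ 2) <= 2 * T * (T - sum_n t m).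
Proof.
  intros Hz Ht Hzt. set (P := sum_n z m : C).
  pose proof (norm_is_series_tail_le _ _ _ _ m Hz Ht Hzt) as Htail.
  pose proof (norm_is_series_le _ _ _ _ Hz Ht Hzt) as HL.
  change (Cmod (L - P) <= T - sum_n t m) in Htail. change norm with Cmod in HL.
  assert (HP : Cmod P <= sum_n t m).
  { eapply Rle_trans; [apply (norm_sum_n_m (V := C_NormedModule)) | apply sum_n_m_le, Hzt]. }
  pose proof (Cmod_triangle (L - P) P) as H1.
  pose proof (Cmod_triangle (- (L - P)) L) as H2. rewrite Cmod_opp in H2.
  replace (L - P + P)%C with L in H1 by ring.
  replace (- (L - P) + L)%C with P in H2 by ring.
  pose proof (Cmod_ge_0 L). pose proof (Cmod_ge_0 P). pose proof (Cmod_ge_0 (L - P)).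
  apply Rabs_le. split; nra.
Qed.

(** * Mean squares over circles *)

Definition root_mean_sqr (f : C -> C) (u : R) (m : nat) : R :=
  / INR (S m) * sum_n (fun j => Cmod (f (RtoC u * Cpow (root_unity (S m)) j)%C) ^ 2) m.


Lemma Cmod_root_unity_point (u : R) (m j : nat) :
  0 <= u -> Cmod (RtoC u * Cpow (root_unity (S m)) j)%C = u.
Proof.
  intros Hu. rewrite Cmod_mult, Cmod_R, Cmod_pow, Cmod_root_unity, pow1, Rabs_pos_eq; lra.
Qed.

Lemma root_mean_sqr_approx (c : nat -> C) (f : C -> C) (u T : R) (m : nat) :
  0 <= u -> is_series (fun n => Cmod (c n) * u ^ n) T ->
  (forall w, Cmod w = u -> is_pseries c w (f w)) ->
  Rabs (root_mean_sqr f u m - sum_n (fun n => (Cmod (c n) * u ^ n) ^ 2) m)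
  <= 2 * T * (T - sum_n (fun n => Cmod (c n) * u ^ n) m).
Proof.
  intros Hu HT Hf.
  set (P := fun w : C => (sum_n (fun n => c n * Cpow w n)%C m : C)).
  set (w j := (RtoC u * Cpow (root_unity (S m)) j)%C).
  assert (HDFT : sum_n (fun n => (Cmod (c n) * u ^ n) ^ 2) m
                 = / INR (S m) * sum_n (fun j => Cmod (P (w j)) ^ 2) m).
  { assert (0 < INR (S m)) by apply lt_0_INR, Nat.lt_0_succ.
    apply (Rmult_eq_reg_l (INR (S m))); [| lra]. rewrite <- Rmult_assoc, Rinv_r, Rmult_1_l by lra.
    rewrite (sum_n_ext (fun n => (Cmod (c n) * u ^ n) ^ 2)
                       (fun n => Cmod (c n * Cpow (RtoC u) n)%C ^ 2)).
    - rewrite <- sum_root_unity_Cmod_sqr. apply sum_n_ext. intros j. do 3 f_equal.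
      apply sum_n_ext. intros n. unfold w. rewrite Cpow_mult_l. C_ring.
    - intros n. now rewrite Cmod_mult, Cmod_pow, Cmod_R, (Rabs_pos_eq u). }
  rewrite HDFT. unfold root_mean_sqr. apply mean_sub_le. intros j.
  assert (Hwj : Cmod (w j) = u) by now apply Cmod_root_unity_point.
  apply Cmod_sqr_sub_partial_sum_le; [now apply is_pseries_C, Hf | exact HT |].
  intros n. now rewrite Cmod_mult, Cmod_pow, Hwj.
Qed.

Lemma root_mean_sqr_cvg (c : nat -> C) (f : C -> C) (u : R) :
  0 <= u -> ex_series (fun n => Cmod (c n) * u ^ n) ->
  (forall w, Cmod w = u -> is_pseries c w (f w)) ->
  is_lim_seq (root_mean_sqr f u) (Series (fun n => (Cmod (c n) * u ^ n) ^ 2)).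
Proof.
  intros Hu Hex Hf.
  set (t n := Cmod (c n) * u ^ n). set (T := Series t).
  assert (HT : is_series t T) by now apply Series_correct.
  assert (Ht0 : forall n, 0 <= t n).
  { intros n. apply Rmult_le_pos; [apply Cmod_ge_0 | now apply pow_le]. }
  assert (Hsq : is_lim_seq (sum_n (fun n => t n ^ 2)) (Series (fun n => t n ^ 2)))
    by now apply Series_correct, ex_series_sqr.
  assert (Herr : is_lim_seq (fun m => 2 * T * (T - sum_n t m)) 0).
  { replace (Finite 0) with (Rbar_mult (2 * T) (T - T)) by (simpl; f_equal; ring).
    apply is_lim_seq_scal_l, is_lim_seq_minus'; [apply is_lim_seq_const | exact HT]. }
  apply is_lim_seq_le_le
    with (u := fun m => sum_n (fun n => t n ^ 2) m - 2 * T * (T - sum_n t m))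
         (w := fun m => sum_n (fun n => t n ^ 2) m + 2 * T * (T - sum_n t m)).
  - intros m. apply Rabs_le_between', (root_mean_sqr_approx c f u T m Hu HT Hf).
  - rewrite <- (Rminus_0_r (Series _)). now apply is_lim_seq_minus'.
  - rewrite <- (Rplus_0_r (Series _)). now apply is_lim_seq_plus'.
Qed.

Lemma Series_sqr_le_of_Cmod_le (c e : nat -> C) (f g : C -> C) (u k : R) :
  0 <= u ->
  ex_series (fun n => Cmod (c n) * u ^ n) -> ex_series (fun n => Cmod (e n) * u ^ n) ->
  (forall w, Cmod w = u -> is_pseries c w (f w)) ->
  (forall w, Cmod w = u -> is_pseries e w (g w)) ->
  (forall w, Cmod w = u -> Cmod (g w) <= k * Cmod (f w)) ->
  Series (fun n => (Cmod (e n) * u ^ n) ^ 2) <= k ^ 2 * Series (fun n => (Cmod (c n) * u ^ n) ^ 2).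
Proof.
  intros Hu Hc He Hf Hg Hgf.
  cut (Rbar_le (Series (fun n => (Cmod (e n) * u ^ n) ^ 2))
         (Rbar_mult (k ^ 2) (Series (fun n => (Cmod (c n) * u ^ n) ^ 2)))); [easy |].
  apply (is_lim_seq_le (root_mean_sqr g u) (fun m => k ^ 2 * root_mean_sqr f u m));
    [| now apply root_mean_sqr_cvg | now apply is_lim_seq_scal_l, root_mean_sqr_cvg].
  intros m. unfold root_mean_sqr.
  rewrite <- Rmult_assoc, (Rmult_comm (k ^ 2)), Rmult_assoc.
  apply Rmult_le_compat_l; [left; apply Rinv_0_lt_compat, lt_0_INR; lia |].
  rewrite <- (sum_n_mult_l (K := R_Ring)). apply sum_n_m_le. intros j.
  specialize (Hgf _ (Cmod_root_unity_point u m j Hu)).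
  change (Cmod (g (u * root_unity (S m) ^ j)%C) ^ 2
          <= k ^ 2 * Cmod (f (u * root_unity (S m) ^ j)%C) ^ 2).
  rewrite <- Rpow_mult_distr. apply pow_incr. split; [apply Cmod_ge_0 | exact Hgf].
Qed.

(** * Termwise differentiation *)

Definition pow_taylor_rem (x y : C) (n : nat) : C :=
  (Cpow x n - Cpow y n - INR n * Cpow y (n - 1) * (x - y))%C.

Lemma pow_taylor_rem_S (x y : C) (n : nat) :
  pow_taylor_rem x y (S n)
  = (x * pow_taylor_rem x y n + INR n * Cpow y (n - 1) * ((x - y) * (x - y)))%C.
Proof.
  unfold pow_taylor_rem. rewrite S_INR, RtoC_plus. replace (S n - 1)%nat with n by lia.
  destruct n as [|n]; [simpl; ring |].
  replace (S n - 1)%nat with n by lia. simpl. ring.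
Qed.

Lemma Cmod_pow_taylor_rem_le (x y : C) (r : R) (n : nat) :
  0 < r -> Cmod x <= r -> Cmod y <= r ->
  r ^ 2 * Cmod (pow_taylor_rem x y n) <= INR n ^ 2 * r ^ n * Cmod (x - y) ^ 2.
Proof.
  intros Hr Hx Hy. set (d := Cmod (x - y)).
  assert (Hd : 0 <= d) by apply Cmod_ge_0.
  assert (Hr2 : 0 <= r ^ 2) by (apply pow_le; lra).
  induction n as [|n IH].
  - replace (pow_taylor_rem x y 0) with (RtoC 0) by (unfold pow_taylor_rem; simpl; ring).
    rewrite Cmod_0. simpl. lra.
  - rewrite pow_taylor_rem_S.
    set (E := Cmod (pow_taylor_rem x y n)) in IH.
    assert (HE : 0 <= E) by apply Cmod_ge_0.
    assert (Hlin : r ^ 2 * (INR n * Cmod (Cpow y (n - 1))) <= INR n * r ^ S n).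
    { destruct n as [|n]; [simpl; lra |].
      replace (S n - 1)%nat with n by lia. rewrite Cmod_pow.
      assert (Cmod y ^ n <= r ^ n) by (apply pow_incr; split; [apply Cmod_ge_0 | exact Hy]).
      replace (INR (S n) * r ^ S (S n)) with (r ^ 2 * (INR (S n) * r ^ n)) by (simpl; ring).
      apply Rmult_le_compat_l; [exact Hr2 |]. apply Rmult_le_compat_l; [apply pos_INR | auto]. }
    eapply Rle_trans; [apply Rmult_le_compat_l, Cmod_triangle; exact Hr2 |].
    rewrite !Cmod_mult, Cmod_R, Rabs_pos_eq by apply pos_INR. fold E d.
    assert (Hx' : r ^ 2 * (Cmod x * E) <= r * (INR n ^ 2 * r ^ n * d ^ 2)).
    { apply Rle_trans with (r * (r ^ 2 * E)); [| apply Rmult_le_compat_l; lra].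
      replace (r ^ 2 * (Cmod x * E)) with (Cmod x * (r ^ 2 * E)) by ring.
      apply Rmult_le_compat_r; nra. }
    assert (Hy' : r ^ 2 * (INR n * Cmod (Cpow y (n - 1)) * (d * d)) <= INR n * r ^ S n * d ^ 2).
    { replace (r ^ 2 * (INR n * Cmod (Cpow y (n - 1)) * (d * d)))
        with (r ^ 2 * (INR n * Cmod (Cpow y (n - 1))) * (d * d)) by ring.
      replace (INR n * r ^ S n * d ^ 2) with (INR n * r ^ S n * (d * d)) by ring.
      apply Rmult_le_compat_r; [nra | exact Hlin]. }
    assert (0 <= r * r ^ n * d ^ 2).
    { apply Rmult_le_pos; [apply Rmult_le_pos, pow_le |]; nra. }
    pose proof (pos_INR n). rewrite S_INR. change (r ^ S n) with (r * r ^ n) in *. nra.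
Qed.

Lemma is_derive_of_quadratic_bound (f : C -> C) (z l : C) (K delta : R) :
  0 < delta ->
  (forall y, Cmod (y - z) < delta ->
     Cmod (f y - f z - (y - z) * l)%C <= K * Cmod (y - z) ^ 2) ->
  is_derive f z l.
Proof.
  intros Hdelta Hf. split; [apply is_linear_scal_l |].
  intros x Hx. apply (is_filter_lim_locally_unique (V := AbsRing_NormedModule C_AbsRing)) in Hx. subst x.
  intros eps.
  assert (Heps : 0 < Rmin delta (eps / (Rabs K + 1))).
  { apply Rmin_pos; [lra |]. apply Rdiv_lt_0_compat; [apply cond_pos | pose proof (Rabs_pos K); lra]. }
  exists (mkposreal _ Heps). intros y Hy.
  change (Cmod (y - z) < Rmin delta (eps / (Rabs K + 1))) in Hy.
  change (Cmod (f y - f z - (y - z) * l)%C <= eps * Cmod (y - z)).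
  pose proof (Rmin_l delta (eps / (Rabs K + 1))). pose proof (Rmin_r delta (eps / (Rabs K + 1))).
  specialize (Hf y ltac:(lra)).
  eapply Rle_trans; [exact Hf |].
  assert (HK : K * Cmod (y - z) <= eps).
  { apply Rle_trans with ((Rabs K + 1) * (eps / (Rabs K + 1))).
    - assert (Cmod (y - z) <= eps / (Rabs K + 1)) by lra.
      pose proof (Rle_abs K). pose proof (Rabs_pos K). pose proof (Cmod_ge_0 (y - z)). nra.
    - right. field. pose proof (Rabs_pos K). lra. }
  pose proof (Cmod_ge_0 (y - z)). simpl. nra.
Qed.

Section PowerSeriesOnDisc.

Variables (c : nat -> C) (R0 : R) (F : C -> C).
Hypothesis HR0 : 0 < R0.
Hypothesis HF : forall w, Cmod w < R0 -> is_pseries c w (F w).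

Lemma CV_radius_Cmod_coef : Rbar_le R0 (CV_radius (fun n => Cmod (c n))).
Proof. apply CV_radius_Cmod_ge; auto. intros w Hw. exists (F w). now apply HF. Qed.

Lemma CV_radius_Cmod_sqr_coef : Rbar_le (R0 ^ 2) (CV_radius (fun n => Cmod (c n) ^ 2)).
Proof. exact (CV_radius_sqr_ge _ _ HR0 CV_radius_Cmod_coef). Qed.

Lemma ex_series_coef_moment (p : nat) (r : R) :
  0 <= r < R0 -> ex_series (fun n => INR n ^ p * Cmod (c n) * r ^ n).
Proof.
  intros Hr. apply (ex_series_lt_CV_radius (fun n => INR n ^ p * Cmod (c n))).
  rewrite CV_radius_INR_pow_mult. exact (Rbar_lt_CV_radius _ _ _ CV_radius_Cmod_coef Hr).
Qed.

Lemma ex_series_termwise_derive (w : C) :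
  Cmod w < R0 -> ex_series (fun n => INR n * c n * Cpow w (n - 1))%C.
Proof.
  intros Hw. pose proof (Cmod_ge_0 w). set (r := (Cmod w + R0) / 2).
  apply (ex_series_le (V := C_CompleteNormedModule) _
           (fun n => / r * (INR n ^ 1 * Cmod (c n) * r ^ n))).
  - intros n. change norm with Cmod.
    rewrite !Cmod_mult, Cmod_R, Rabs_pos_eq, Cmod_pow by apply pos_INR.
    destruct n as [|n]; [simpl; right; ring |].
    replace (S n - 1)%nat with n by lia.
    replace (/ r * (INR (S n) ^ 1 * Cmod (c (S n)) * r ^ S n))
      with (INR (S n) * Cmod (c (S n)) * r ^ n) by (unfold r; simpl; field; lra).
    apply Rmult_le_compat_l; [apply Rmult_le_pos; [apply pos_INR | apply Cmod_ge_0] |].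
    apply pow_incr. unfold r. lra.
  - apply (ex_series_scal_l (V := R_NormedModule)), ex_series_coef_moment. unfold r. lra.
Qed.

Lemma is_derive_termwise (w D : C) :
  Cmod w < R0 -> is_series (fun n => INR n * c n * Cpow w (n - 1))%C D -> is_derive F w D.
Proof.
  intros Hw HD. pose proof (Cmod_ge_0 w) as Hw0. set (r := (Cmod w + R0) / 2).
  assert (Hr : Cmod w < r < R0) by (unfold r; lra).
  set (Q := Series (fun n => INR n ^ 2 * Cmod (c n) * r ^ n)).
  assert (HQ : is_series (fun n => INR n ^ 2 * Cmod (c n) * r ^ n) Q)
    by (apply Series_correct, ex_series_coef_moment; lra).
  apply (is_derive_of_quadratic_bound F w D (Q / r ^ 2) (r - Cmod w)); [lra |].
  intros y Hy.
  assert (Hyr : Cmod y <= r).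
  { replace y with (y - w + w)%C by ring. eapply Rle_trans; [apply Cmod_triangle | lra]. }
  assert (Hrem : is_series (fun n => c n * pow_taylor_rem y w n)%C (F y - F w - (y - w) * D)%C).
  { pose proof (proj1 (is_pseries_C _ _ _) (HF y ltac:(lra))) as Hy'.
    pose proof (proj1 (is_pseries_C _ _ _) (HF w Hw)) as Hw'.
    pose proof (is_series_minus _ _ _ _ (is_series_minus _ _ _ _ Hy' Hw')
                  (is_series_scal_l (y - w)%C _ _ HD)) as Hdiff.
    eapply is_series_ext; [| exact Hdiff]. intros n. unfold pow_taylor_rem. C_ring. }
  replace (Q / r ^ 2 * Cmod (y - w) ^ 2) with (Q * (Cmod (y - w) ^ 2 / r ^ 2)) by (field; lra).
  apply (norm_is_series_le _ _ _ _ Hrem (is_series_scal_r _ _ _ HQ)).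
  intros n. change norm with Cmod. rewrite Cmod_mult.
  assert (Hr2 : 0 < r ^ 2) by (apply pow_lt; lra).
  apply (Rmult_le_reg_l (r ^ 2)); [exact Hr2 |].
  replace (r ^ 2 * (INR n ^ 2 * Cmod (c n) * r ^ n * (Cmod (y - w) ^ 2 / r ^ 2)))
    with (Cmod (c n) * (INR n ^ 2 * r ^ n * Cmod (y - w) ^ 2)) by (field; lra).
  rewrite <- Rmult_assoc, (Rmult_comm (r ^ 2)), Rmult_assoc.
  apply Rmult_le_compat_l; [apply Cmod_ge_0 |].
  apply Cmod_pow_taylor_rem_le; lra.
Qed.

Lemma is_pseries_INR_mult_of_is_derive (w L : C) :
  Cmod w < R0 -> is_derive F w L -> is_pseries (fun n => INR n * c n)%C w (w * L)%C.
Proof.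
  intros Hw HL. destruct (ex_series_termwise_derive w Hw) as [D HD].
  assert (HLD : L = D).
  { rewrite <- (is_C_derive_unique _ _ _ HL). apply is_C_derive_unique, is_derive_termwise; auto. }
  subst L. apply is_pseries_C.
  eapply is_series_ext; [| exact (is_series_scal_l w _ _ HD)].
  intros [|n]; change scal with Cmult; [simpl; C_ring |].
  replace (S n - 1)%nat with n by lia. rewrite Cpow_S. C_ring.
Qed.

End PowerSeriesOnDisc.

(** * The coefficient inequalities *)

Lemma Cmod_INR_mult (n : nat) (z : C) : Cmod (INR n * z)%C = INR n * Cmod z.
Proof. now rewrite Cmod_mult, Cmod_R, Rabs_pos_eq by apply pos_INR. Qed.

Section CoefficientInequalities.

Variables (a b : nat -> C) (F G F' G' : C -> C) (R0 k : R).
Hypothesis HR0 : 0 < R0.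
Hypothesis Ha : forall w, Cmod w < R0 -> is_pseries a w (F w).
Hypothesis Hb : forall w, Cmod w < R0 -> is_pseries b w (G w).
Hypothesis HF : forall w, Cmod w < R0 -> is_derive F w (F' w).
Hypothesis HG : forall w, Cmod w < R0 -> is_derive G w (G' w).
Hypothesis Hk : forall w, Cmod w < R0 -> Cmod (G' w) <= k * Cmod (F' w).

Lemma INR_sqr_coef_PSeries_le (x : R) :
  0 < x < R0 ^ 2 ->
  PSeries (fun n => INR n * (INR n * Cmod (b n) ^ 2)) x
  <= k ^ 2 * PSeries (fun n => INR n * (INR n * Cmod (a n) ^ 2)) x.
Proof.
  intros Hx. set (u := sqrt x).
  assert (Hu : 0 < u < R0).
  { split; [apply sqrt_lt_R0; lra |].
    rewrite <- (sqrt_pow2 R0) by lra. apply sqrt_lt_1_alt. lra. }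
  assert (Hconv : forall c : nat -> C,
    PSeries (fun n => INR n * (INR n * Cmod (c n) ^ 2)) x
    = Series (fun n => (Cmod (INR n * c n)%C * u ^ n) ^ 2)).
  { intros c. apply Series_ext. intros n.
    rewrite Cmod_INR_mult, <- (pow2_sqrt x), <- pow_mult, Nat.mul_comm, pow_mult by lra.
    fold u. ring. }
  assert (Hmom : forall (c : nat -> C) (H : C -> C),
    (forall w, Cmod w < R0 -> is_pseries c w (H w)) ->
    ex_series (fun n => Cmod (INR n * c n)%C * u ^ n)).
  { intros c H Hc. eapply ex_series_ext; [| apply (ex_series_coef_moment c R0 H HR0 Hc 1 u); lra].
    intros n. now rewrite Cmod_INR_mult, pow_1. }
  rewrite !Hconv.
  apply (Series_sqr_le_of_Cmod_le _ _ (fun w => w * F' w)%C (fun w => w * G' w)%C);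
    [lra | apply (Hmom _ _ Ha) | apply (Hmom _ _ Hb) | | |].
  - intros w Hw. apply (is_pseries_INR_mult_of_is_derive a R0 F HR0 Ha); [lra | apply HF; lra].
  - intros w Hw. apply (is_pseries_INR_mult_of_is_derive b R0 G HR0 Hb); [lra | apply HG; lra].
  - intros w Hw. rewrite !Cmod_mult.
    specialize (Hk w ltac:(lra)). pose proof (Cmod_ge_0 w). nra.
Qed.

Lemma coef_sqr_sums_le (x : R) :
  0 <= x < R0 ^ 2 ->
  Rbar_le (sum_from1 (fun n => INR n * Cmod (b n) ^ 2 * x ^ n))
    (Rbar_mult (k ^ 2) (sum_from1 (fun n => INR n * Cmod (a n) ^ 2 * x ^ n)))
  /\ Rbar_le (sum_from1 (fun n => Cmod (b n) ^ 2 * x ^ n))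
    (Rbar_mult (k ^ 2) (sum_from1 (fun n => Cmod (a n) ^ 2 * x ^ n))).
Proof.
  intros Hx.
  assert (Hk2 : 0 <= k ^ 2) by apply pow2_ge_0.
  pose proof (CV_radius_Cmod_sqr_coef a R0 F HR0 Ha) as Ha0.
  pose proof (CV_radius_Cmod_sqr_coef b R0 G HR0 Hb) as Hb0.
  assert (Ha1 := Ha0). rewrite <- CV_radius_INR_mult in Ha1.
  assert (Hb1 := Hb0). rewrite <- CV_radius_INR_mult in Hb1.
  assert (Hfirst : forall y, 0 <= y < R0 ^ 2 ->
    PSeries (fun n => INR n * Cmod (b n) ^ 2) y
    <= k ^ 2 * PSeries (fun n => INR n * Cmod (a n) ^ 2) y).
  { intros y Hy.
    pose proof (PSeries_sub_le_of_INR_mult_le _ _ _ _ Hk2 Hb1 Ha1 INR_sqr_coef_PSeries_le y Hy) as H.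
    cbv beta in H. change (INR 0) with 0 in H. rewrite !Rmult_0_l, !Rminus_0_r in H. exact H. }
  rewrite !(sum_from1_PSeries (fun n => INR n * Cmod _ ^ 2)),
    !(sum_from1_PSeries (fun n => Cmod _ ^ 2)) by now apply (Rbar_lt_CV_radius _ (R0 ^ 2)).
  simpl. rewrite !Rmult_0_l, !Rminus_0_r. split; [now apply Hfirst |].
  apply (PSeries_sub_le_of_INR_mult_le _ _ _ _ Hk2 Hb0 Ha0); [| exact Hx].
  intros y Hy. apply Hfirst. lra.
Qed.

End CoefficientInequalities.

Lemma is_derive_translate (f : C -> C) (c z l : C) :
  is_derive f (z - c)%C l -> is_derive (fun w => f (w - c)%C) z l.
Proof.
  intros Hf.
  pose proof (is_derive_comp f (fun w => minus w c) z l _ Hf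
    (is_derive_minus _ _ z _ _ (is_derive_id z)
       (is_derive_const (V := AbsRing_NormedModule C_AbsRing) c z))) as H.
  match type of H with is_derive _ _ ?d => replace d with l in H end; [exact H |].
  change (@eq C l (Cmult (Cminus (RtoC 1) (RtoC 0)) l)). ring.
Qed.

Lemma Cmod_affine_cgam (gamma : R) (z : C) :
  gamma < 1 ->
  Cmod (Cplus (Cmult (RtoC (1 - gamma)) z) (RtoC gamma))
  = (1 - gamma) * Cmod (Cplus z (RtoC (cgam gamma))).
Proof.
  intros Hgam. rewrite <- (Rabs_pos_eq (1 - gamma)) at 2 by lra.
  rewrite <- Cmod_R, <- Cmod_mult. f_equal.
  unfold cgam. apply injective_projections; simpl; field; lra.
Qed.

Lemma pow_rescale_sqr (s r X : R) (n : nat) :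
  s <> 0 -> X / s ^ (2 * n) * (s * r) ^ (2 * n) = X * (r ^ 2) ^ n.
Proof.
  intros Hs. rewrite Rpow_mult_distr, <- pow_mult. field. now apply pow_nonzero.
Qed.

Lemma pow_rescale (s r X : R) (n : nat) :
  s <> 0 -> X / s ^ (2 * n) * (s * r) ^ n = X * (r / s) ^ n.
Proof.
  intros Hs. unfold Rdiv. rewrite !Rpow_mult_distr, pow_inv.
  replace (2 * n)%nat with (n + n)%nat by lia. rewrite pow_add.
  field. now apply pow_nonzero.
Qed.

Theorem lemma2p3 (gamma k : R) (a b : nat -> C) (h g h' g' : C -> C) :
  0 <= gamma < 1 ->
  0 <= k < 1 ->
  (* power series expansions of h and g about -gamma/(1-gamma), valid in Omega_gamma *)
  (forall z : C, Omega gamma z -> is_pseries a (Cplus z (RtoC (cgam gamma))) (h z)) ->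
  (forall z : C, Omega gamma z -> is_pseries b (Cplus z (RtoC (cgam gamma))) (g z)) ->
  (* h' and g' are the complex derivatives of h and g in Omega_gamma *)
  (forall z : C, Omega gamma z -> is_derive h z (h' z)) ->
  (forall z : C, Omega gamma z -> is_derive g z (g' z)) ->
  (forall z : C, Omega gamma z -> Cmod (h z) <= 1) ->
  (forall z : C, Omega gamma z -> Cmod (g' z) <= k * Cmod (h' z)) ->
  forall z : C,
    let rho := Cmod (Cplus (Cmult (RtoC (1 - gamma)) z) (RtoC gamma)) in
    rho < 1 ->
    Rbar_le
      (sum_from1 (fun n => INR n * (Cmod (b n))^2 / (1 - gamma)^(2*n) * rho^(2*n)))
      (Rbar_mult (k^2)
        (sum_from1 (fun n => INR n * (Cmod (a n))^2 / (1 - gamma)^(2*n) * rho^(2*n))))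
    /\
    Rbar_le
      (sum_from1 (fun n => (Cmod (b n))^2 / (1 - gamma)^(2*n) * rho^n))
      (Rbar_mult (k^2)
        (sum_from1 (fun n => (Cmod (a n))^2 / (1 - gamma)^(2*n) * rho^n))).
Proof.
  intros Hgam Hk Ha Hb Hh' Hg' _ Hgh z rho Hrho.
  set (c := RtoC (cgam gamma)). set (R0 := 1 / (1 - gamma)).
  assert (HR0 : 0 < R0) by (apply Rdiv_lt_0_compat; lra).
  assert (Hs : 1 - gamma <> 0) by lra.
  assert (Hrho_w : rho = (1 - gamma) * Cmod (Cplus z c)) by (apply Cmod_affine_cgam; lra).
  assert (Hw : Cmod (Cplus z c) < R0).
  { unfold R0. apply (Rmult_lt_reg_l (1 - gamma)); [lra |]. field_simplify; lra. }
  assert (HOmega : forall v, Cmod v < R0 -> Omega gamma (v - c)%C).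
  { intros v Hv. unfold Omega. fold c R0. now replace (v - c + c)%C with v by ring. }
  assert (Hser : forall (e : nat -> C) (f : C -> C),
    (forall z, Omega gamma z -> is_pseries e (Cplus z c) (f z)) ->
    forall v, Cmod v < R0 -> is_pseries e v (f (v - c)%C)).
  { intros e f Hf v Hv. replace v with (Cplus (v - c) c) at 1 by ring. now apply Hf, HOmega. }
  pose proof (coef_sqr_sums_le a b (fun v => h (v - c)%C) (fun v => g (v - c)%C)
    (fun v => h' (v - c)%C) (fun v => g' (v - c)%C) R0 k HR0 (Hser a h Ha) (Hser b g Hb)
    (fun v Hv => is_derive_translate _ _ _ _ (Hh' _ (HOmega v Hv)))
    (fun v Hv => is_derive_translate _ _ _ _ (Hg' _ (HOmega v Hv)))
    (fun v Hv => Hgh _ (HOmega v Hv))) as Hsums.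
  rewrite Hrho_w.
  rewrite !(sum_from1_ext _ _ (fun n => pow_rescale_sqr _ _ _ n Hs)),
    !(sum_from1_ext _ _ (fun n => pow_rescale _ _ _ n Hs)).
  pose proof (Cmod_ge_0 (Cplus z c)).
  split; apply Hsums; split.
  - apply pow_le. lra.
  - simpl. nra.
  - apply Rdiv_le_0_compat; lra.
  - replace (R0 ^ 2) with (R0 / (1 - gamma)) by (unfold R0; field; lra).
    apply Rmult_lt_compat_r; [apply Rinv_0_lt_compat; lra | exact Hw].
Qed.
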